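(* Let $A$ be a sub-tree of $T$ with sub-trees $A_0,\dots,A_m$ as in the context. For $i=0,\dots,m$ let $S_i^*$ be the inclusion-maximal set among the maximizers of $G(S,d(r_A))$ over $S\subseteq V_{A_i}$ (i.e. the maximal optimal set of $f_{A_i}$ at $x=d(r_A)$, which lies in its domain $[0,d(r_{A_i})]$). Then the inclusion-maximal optimal set of $f_A$ at $x=d(r_A)$, which is the largest element of the matryoshka $\mathcal{M}_A$, equals $S_0^*\cup S_1^*\cup\dots\cup S_m^*$.
   Context: Setting. $T$ is a finite tree rooted at $r_T$, node set $V_T$; every edge $e$ has weight $w_e\ge 0$. Every node $v$ has a probability $\pi_v\in(0,1]$ and a prize $p_v\in\mathbb{R}$. $d(v)$ is the total weight of the path from $r_T$ to $v$. A random set $\omega\subseteq V_T$ contains each node $v$ independently with probability $\pi_v$. For $S\subseteq V_T$, $P(S)=1-\prod_{s\in S}(1-\pi_s)$ ($P(\emptyset)=0$). For a node $a$, the sub-tree $A$ rooted at $r_A=a$ consists of $a$ and all its descendants, with node set $V_A$; if $a$ has children $c_1,\dots,c_m$, then $A_i$ ($1\le i\le m$) is the sub-tree rooted at $c_i$, $A_0$ is the sub-tree consisting of the single node $r_A$, $\mathcal{I}_A=\{0,1,\dots,m\}$, and $V_A^I=\bigcup_{i\in I}V_{A_i}$ for $I\subseteq\mathcal{I}_A$. For $Q\subseteq V_T$, $W(Q)$ is the total weight of the edges lying on at least one path from $r_T$ to a node of $Q$. For $S\subseteq V_A$ and $x\le d(r_A)$ the expected profit is $G(S,x)=\sum_{s\in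 S}p_s\pi_s-\mathbb{E}[W(S\cap\omega)]+x\,P(S)$. Characteristic function. For a sub-tree $A$, $I\subseteq\mathcal{I}_A$ and $x\in[0,d(r_A)]$, $f_A^I(x)=\max_{S\subseteq V_A^I}G(S,x)$, and $f_A=f_A^{\mathcal{I}_A}$. A set $S\subseteq V_A^I$ with $G(S,x)=f_A^I(x)$ is an optimal set (for $f_A^I$) at $x$. The matryoshka $\mathcal{M}_A^I$ is the family of all $S\subseteq V_A^I$ such that for some $x\in[0,d(r_A)]$, $S$ is an optimal set at $x$ and no proper superset of $S$ contained in $V_A^I$ is optimal at $x$; $\mathcal{M}_A=\mathcal{M}_A^{\mathcal{I}_A}$. *)

From mathcomp Require Import all_boot all_order all_algebra.
Set Implicit Arguments. Unset Strict Implicit. Unset Printing Implicit Defensive.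
Import Order.TTheory GRing.Theory Num.Theory.
Local Open Scope ring_scope.

Section Tree.
Variables (R : realFieldType) (V : finType) (par : V -> V) (r : V).

(* The edge
   between [v <> r] and [par v] carries weight [w v]. *)
Definition is_tree : Prop :=
  par r = r /\ forall v : V, connect (frel par) v r.

Definition subtree (a : V) : {set V} := [set u | connect (frel par) u a].

Definition is_child (a c : V) : bool := (par c == a) && (c != r).

(* nodes u <> r on the root-path of v; each stands for the edge (u, par u) *)
Definition path_edges (v : V) : {set V} :=
  [set u | connect (frel par) v u & u != r].

Variables (w pi p : V -> R).

Definition dist (v : V) : R := \sum_(u in path_edges v) w u.

Definition Wt (Q : {set V}) : R :=
  \sum_(u in \bigcup_(q in Q) path_edges q) w u.

Definition prob_omega (om : {set V}) : R :=
  \prod_(v : V) (if v \in om then pi v else 1 - pi v).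

Definition EW (S : {set V}) : R :=
  \sum_(om : {set V}) prob_omega om * Wt (S :&: om).

Definition Pr (S : {set V}) : R := 1 - \prod_(s in S) (1 - pi s).

Definition G (S : {set V}) (x : R) : R :=
  \sum_(s in S) p s * pi s - EW S + x * Pr S.

Definition optimal (D : {set V}) (x : R) (S : {set V}) : Prop :=
  S \subset D /\ forall S' : {set V}, S' \subset D -> G S' x <= G S x.

Definition max_optimal (D : {set V}) (x : R) (S : {set V}) : Prop :=
  optimal D x S /\ forall S' : {set V}, S \proper S' -> S' \subset D -> ~ optimal D x S'.

Definition matryoshka (a : V) (S : {set V}) : Prop :=
  exists x : R, 0 <= x <= dist a /\ max_optimal (subtree a) x S.

End Tree.

From Pilot Require Import Defs.
From mathcomp Require Import all_boot all_order all_algebra.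
From mathcomp Require Import ring lra.
Set Implicit Arguments. Unset Strict Implicit. Unset Printing Implicit Defensive.
Import Order.TTheory GRing.Theory Num.Theory.
Local Open Scope ring_scope.

(* The sub-tree of a is split into blocks: {a} and the sub-trees of the
   children.  Two facts about the profit G drive the proof.
   - Additivity at x = d(a): every nonempty subset of the sub-tree uses the
     whole root path of a, and in the term x * P(S) the value d(a) cancels
     exactly that weight; what remains of W lies inside the blocks.  Hence
     G(., d(a)) is additive over the blocks (G_blocks), and gluing maximal
     optimal sets of the blocks gives a maximal optimal set of the sub-tree
     (union_max_optimal, a general fact about block-additive functions).
   - Supermodularity for x <= d(a): W is a coverage function and the
     nonempty indicator is submodular, so G(., x) is supermodular on subsets
     of the sub-tree (G_supermod).  Together with the monotonicity of P this
     shows that every set optimal at some x <= d(a) lies inside the maximal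
     optimal set at d(a) (optimal_sub_max_optimal), which makes that set the
     largest element of the matryoshka. *)

Section RootedTree.
Variables (V : finType) (par : V -> V) (r : V).

Lemma fconnect_iterP x y :
  reflect (exists n, iter n par x = y) (fconnect par x y).
Proof.
apply: (iffP idP) => [xy|[n <-]]; last exact: fconnect_iter.
by exists (findex par x y); rewrite iter_findex.
Qed.

Lemma iter_period n k x : iter n par x = x -> iter (k * n) par x = x.
Proof. by move=> xn; elim: k => // k IH; rewrite mulSn iterD IH xn. Qed.

Hypothesis Htree : is_tree par r.

Lemma iter_root n : iter n par r = r.
Proof. by elim: n => //= n ->; case: Htree. Qed.

Lemma fixpoint_root v : par v = v -> v = r.
Proof.
move=> pv; case: Htree => _ /(_ v) /fconnect_iterP [n <-].
by elim: n => //= n <-.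
Qed.

(* Following parents never returns to a node other than the root, so the
   ancestor relation is antisymmetric. *)
Lemma fconnect_antisym x y : fconnect par x y -> fconnect par y x -> x = y.
Proof.
move=> /fconnect_iterP [n xy] /fconnect_iterP [m yx].
case: n xy => [|n] xy; first by rewrite -xy.
have xcyc : iter (m + n.+1) par x = x by rewrite iterD xy.
have xr : x = r.
  case: Htree => _ /(_ x) /fconnect_iterP [M xM].
  have Mle : (M <= M * (m + n.+1))%N by rewrite leq_pmulr // addnS.
  rewrite -(iter_period M xcyc) -(subnK Mle) iterD xM; exact: iter_root.
by rewrite -xy xr iter_root.
Qed.

Lemma fconnect_total q x y : fconnect par q x -> fconnect par q y ->
  fconnect par x y \/ fconnect par y x.
Proof.
move=> /fconnect_iterP [n <-] /fconnect_iterP [m <-].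
case: (leqP n m) => nm.
  by left; apply/fconnect_iterP; exists (m - n)%N; rewrite -iterD subnK.
by right; apply/fconnect_iterP; exists (n - m)%N; rewrite -iterD subnK // ltnW.
Qed.

Lemma fconnect_par x y : fconnect par x y -> x != y -> fconnect par (par x) y.
Proof.
move=> /fconnect_iterP [[|n] <-] /=; first by rewrite eqxx.
by move=> _; apply/fconnect_iterP; exists n; rewrite -iterSr.
Qed.

Variable a : V.
Local Notation child := (is_child par r a).

Lemma child_neq c : child c -> c != a.
Proof.
case/andP => /eqP pc cr; apply: contraNneq cr => ca.
by rewrite ca (fixpoint_root (_ : par a = a)) // -{1}ca.
Qed.

Lemma child_notin c : child c -> a \notin subtree par c.
Proof.
move=> ch; rewrite inE; apply: contra (child_neq ch) => ac.
case/andP: ch => /eqP pc _.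
by apply/eqP/fconnect_antisym => //; rewrite -pc; apply: connect1; rewrite /= eqxx.
Qed.

Lemma child_subtree c : child c -> subtree par c \subset subtree par a.
Proof.
case/andP => /eqP pc _; apply/subsetP => u; rewrite !inE => uc.
by apply: connect_trans uc _; apply: connect1; rewrite /= pc.
Qed.

Lemma child_subtrees_disjoint c c' : child c -> child c' -> c != c' ->
  [disjoint subtree par c & subtree par c'].
Proof.
move=> ch ch' cc'; apply/pred0P => u /=; rewrite !inE.
apply/negP => /andP[uc uc'].
wlog cc'_anc : c c' ch ch' cc' uc uc' / fconnect par c c'.
  move=> W; case: (fconnect_total uc uc') => anc; first exact: (W c c').
  by apply: (W c' c) => //; rewrite eq_sym.
have := fconnect_par cc'_anc cc'; case/andP: ch => /eqP -> _ => ac'.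
by move: (child_notin ch'); rewrite inE ac'.
Qed.

Lemma subtree_exit c q u : child c -> q \in subtree par c ->
  fconnect par q u -> u \in subtree par c \/ fconnect par a u.
Proof.
move=> ch; rewrite inE => qc qu; case: (fconnect_total qc qu) => [cu|uc].
  case: (eqVneq c u) => [<-|ne]; first by left; rewrite inE connect0.
  by right; case/andP: ch => /eqP <- _; exact: fconnect_par.
by left; rewrite inE.
Qed.

Lemma subtree_decomp u : u \in subtree par a -> u != a ->
  exists2 c, child c & u \in subtree par c.
Proof.
rewrite inE => ua ne.
have ex : exists n, iter n par u == a by case/fconnect_iterP: ua => n <-; exists n.
case: (ex_minnP ex) => [[|n] /eqP un nmin]; first by move: ne; rewrite -un eqxx.
exists (iter n par u); last by rewrite inE fconnect_iter.
rewrite /is_child -iterS un eqxx /=; apply/negP => /eqP nr.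
have : iter n par u == a by rewrite -un iterS nr; case: Htree => -> _.
by move/nmin; rewrite ltnn.
Qed.

End RootedTree.

Definition cover (I U : finType) (E : I -> {set U}) (Q : {set I}) : {set U} :=
  \bigcup_(q in Q) E q.

Section Cover.
Variables (I U : finType) (E : I -> {set U}).

Lemma cover0 : cover E set0 = set0.
Proof. exact: big_set0. Qed.

Lemma coverU (A B : {set I}) : cover E (A :|: B) = cover E A :|: cover E B.
Proof. exact: bigcup_setU. Qed.

Lemma coverS (A B : {set I}) : A \subset B -> cover E A \subset cover E B.
Proof.
move=> /subsetP AB; apply/bigcupsP => q /AB qB.
by apply: (bigcup_max q).
Qed.

Lemma coverD (Q : {set I}) (X : {set U}) :
  cover E Q :\: X = cover (fun q => E q :\: X) Q.
Proof.
apply/setP => u; rewrite inE; apply/andP/bigcupP.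
  by case=> uX /bigcupP [q qQ uq]; exists q; rewrite // inE uX.
by case=> q qQ; rewrite inE => /andP[uX uq]; split => //; apply/bigcupP; exists q.
Qed.

End Cover.

Section Zones.
Variables (V : finType) (par : V -> V) (r : V).
Hypothesis Htree : is_tree par r.
Variable a : V.
Local Notation child := (is_child par r a).
Local Notation pe := (path_edges par r).

Definition reduced_cover (Q : {set V}) : {set V} :=
  cover (fun q => pe q :\: pe a) Q.

(* The zone of Q : the nodes of Q together with its reduced cover.  Sets with
   disjoint zones interact neither through shared nodes nor shared edges. *)
Definition zone (Q : {set V}) : {set V} := Q :|: reduced_cover Q.

Lemma zone0 : zone set0 = set0.
Proof. by rewrite /zone /reduced_cover cover0 setU0. Qed.

Lemma zoneU (A B : {set V}) : zone (A :|: B) = zone A :|: zone B.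
Proof. by rewrite /zone /reduced_cover coverU setUACA. Qed.

Definition block_index (i : V) : bool := (i == a) || child i.
Definition block (i : V) : {set V} := if i == a then [set a] else subtree par i.

Lemma block_subtree i : block_index i -> block i \subset subtree par a.
Proof.
rewrite /block_index /block; case: eqP => [->|_] /= ch.
  by rewrite sub1set inE connect0.
exact: child_subtree ch.
Qed.

Lemma blocks_cover : subtree par a = \bigcup_(i | block_index i) block i.
Proof.
apply/eqP; rewrite eqEsubset; apply/andP; split; last first.
  by apply/bigcupsP => i; exact: block_subtree.
apply/subsetP => u ua; case: (eqVneq u a) => [->|ne].
  by apply/bigcupP; exists a; rewrite /block_index ?eqxx // /block eqxx set11.
have [c ch uc] := subtree_decomp Htree ua ne.
apply/bigcupP; exists c; first by rewrite /block_index ch orbT.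
by rewrite /block (negbTE (child_neq Htree ch)).
Qed.

Lemma blocks_disjoint i j : block_index i -> block_index j -> i != j ->
  [disjoint block i & block j].
Proof.
have root_child c : child c -> [disjoint [set a] & subtree par c].
  by move=> ch; rewrite disjoints1 (child_notin Htree ch).
rewrite /block_index /block => /orP[/eqP->|chi] /orP[/eqP->|chj];
  rewrite ?eqxx // => ij.
- by rewrite (negbTE (child_neq Htree chj)); exact: root_child.
- by rewrite (negbTE (child_neq Htree chi)) disjoint_sym; exact: root_child.
rewrite (negbTE (child_neq Htree chi)) (negbTE (child_neq Htree chj)).
apply: (child_subtrees_disjoint Htree chi chj ij).
Qed.

(* A subset of a block has its whole zone inside that block: the root paths
   of nodes below a child c leave the sub-tree of c only through the root
   path of a. *)
Lemma zone_block i (Q : {set V}) :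
  block_index i -> Q \subset block i -> zone Q \subset block i.
Proof.
move=> bi Qi; rewrite /zone subUset Qi /=; apply/bigcupsP => q qQ.
have qi := subsetP Qi q qQ; move: bi qi; rewrite /block_index /block.
case: eqP => [-> _|_ /= ch qc].
  by rewrite inE => /eqP ->; rewrite setDv sub0set.
apply/subsetP => u; rewrite !inE negb_and negbK => /andP[/orP[ua|ur] /andP[qu ur']].
- by case: (subtree_exit ch qc qu) => [|au]; [rewrite inE | rewrite au in ua].
- by rewrite ur in ur'.
Qed.

End Zones.

Section SetSums.
Variables (R : numDomainType) (T : finType).
Implicit Types (F : T -> R) (X Y : {set T}).

Lemma sum_setU_setI F X Y :
  \sum_(t in X :|: Y) F t + \sum_(t in X :&: Y) F t =
  \sum_(t in X) F t + \sum_(t in Y) F t.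
Proof.
rewrite !(big_mkcond (fun t => t \in _)) -!big_split; apply: eq_bigr => t _.
by rewrite !inE; case: (t \in X); case: (t \in Y); rewrite /= ?addr0 ?add0r.
Qed.

Lemma sum_subset_le F X Y : (forall t, 0 <= F t) -> X \subset Y ->
  \sum_(t in X) F t <= \sum_(t in Y) F t.
Proof.
move=> F_ge0 XY; rewrite [leRHS](big_setID X) (setIidPr XY) lerDl.
exact: sumr_ge0.
Qed.

Definition nonempty_ind (Q : {set T}) : R := (Q != set0)%:R.

Lemma nonempty_ind_submod X Y :
  nonempty_ind (X :|: Y) + nonempty_ind (X :&: Y) <= nonempty_ind X + nonempty_ind Y.
Proof.
rewrite /nonempty_ind; case: (eqVneq X set0) => [->|nX].
  by rewrite set0U set0I eqxx /= mulr0n addr0 add0r.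
case: (eqVneq Y set0) => [->|nY].
  by rewrite setU0 setI0 eqxx nX.
by apply: lerD; rewrite ler_nat leq_b1.
Qed.

Lemma nonempty_ind_mono X Y : X \subset Y -> nonempty_ind X <= nonempty_ind Y.
Proof.
rewrite /nonempty_ind; case: (eqVneq X set0) => [_|nX XY]; first by rewrite ler0n.
suff -> : Y != set0 by [].
by apply: contraNneq nX => Y0; rewrite -subset0 -Y0.
Qed.

End SetSums.

Section CoverWeight.
Variables (R : numDomainType) (I U : finType) (E : I -> {set U}) (w : U -> R).
Hypothesis w_ge0 : forall u, 0 <= w u.

Definition cover_weight (Q : {set I}) : R := \sum_(u in cover E Q) w u.

Lemma cover_weight_submod (A B : {set I}) :
  cover_weight (A :|: B) + cover_weight (A :&: B) <= cover_weight A + cover_weight B.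
Proof.
rewrite /cover_weight coverU -(sum_setU_setI _ (cover E A)) lerD2l.
apply: sum_subset_le => //.
by rewrite subsetI !coverS ?subsetIl ?subsetIr.
Qed.

Lemma cover_weight_modular (A B : {set I}) : [disjoint cover E A & cover E B] ->
  cover_weight (A :|: B) + cover_weight (A :&: B) = cover_weight A + cover_weight B.
Proof.
move=> dAB; have AB0 : cover E (A :&: B) = set0.
  apply/eqP; rewrite -subset0 -(disjoint_setI0 dAB) subsetI.
  by rewrite !coverS ?subsetIl ?subsetIr.
by rewrite /cover_weight coverU AB0 -(disjoint_setI0 dAB) sum_setU_setI.
Qed.

End CoverWeight.

Section OutcomeProbability.
Variables (R : realFieldType) (V : finType) (pi : V -> R).
Hypothesis Hpi : forall v : V, 0 < pi v <= 1.
Local Notation P := (prob_omega pi).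

Lemma sum_outcomes_prod (F : V -> bool -> R) :
  \sum_(om : {set V}) \prod_(v : V) F v (v \in om) =
  \prod_(v : V) (F v true + F v false).
Proof.
transitivity (\prod_(v : V) \sum_(b : bool) F v b); last first.
  by apply: eq_bigr => v _; rewrite big_bool.
rewrite bigA_distr_bigA (reindex (fun f : {ffun V -> bool} => [set v | f v])) /=.
  by apply: eq_bigr => f _; apply: eq_bigr => v _; rewrite inE.
apply: onW_bij; exists (fun om : {set V} => [ffun v => v \in om]).
  by move=> f; apply/ffunP => v; rewrite ffunE inE.
by move=> om; apply/setP => v; rewrite inE ffunE.
Qed.

Lemma prob_omega_ge0 om : 0 <= P om.
Proof.
apply: prodr_ge0 => v _; have /andP[pi_gt0 pi_le1] := Hpi v.
by case: (v \in om); [exact: ltW | rewrite subr_ge0].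
Qed.

Lemma prob_omega_sum : \sum_om P om = 1.
Proof.
rewrite /prob_omega.
have /= -> := sum_outcomes_prod (fun v b => if b then pi v else 1 - pi v).
by rewrite big1 // => v _; rewrite addrC subrK.
Qed.

Lemma prob_avoid S :
  \sum_om P om * (S :&: om == set0)%:R = \prod_(s in S) (1 - pi s).
Proof.
pose F v (b : bool) := if b then (if v \in S then 0 else pi v) else 1 - pi v.
transitivity (\sum_(om : {set V}) \prod_(v : V) F v (v \in om)).
  apply: eq_bigr => om _; rewrite /prob_omega /F.
  case: eqP => [S0|/eqP /set0Pn [v]]; last first.
    by rewrite inE => /andP[vS vom]; rewrite mulr0 (bigD1 v) //= vom vS mul0r.
  rewrite mulr1; apply: eq_bigr => v _; case vom: (v \in om) => //.
  by case vS: (v \in S) => //; move/setP: S0 => /(_ v); rewrite !inE vS vom.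
rewrite sum_outcomes_prod [RHS]big_mkcond; apply: eq_bigr => v _ /=.
by rewrite /F; case: (v \in S); rewrite ?add0r // addrC subrK.
Qed.

Lemma Pr_expectation S :
  Pr pi S = \sum_om P om * nonempty_ind R (S :&: om).
Proof.
have -> : Pr pi S = 1 - \sum_om P om * (S :&: om == set0)%:R.
  by rewrite prob_avoid.
rewrite -{1}prob_omega_sum -sumrB; apply: eq_bigr => om _.
by rewrite /nonempty_ind; case: eqP => _; rewrite ?mulr1 ?mulr0 ?subr0 ?subrr.
Qed.

Lemma Pr_mono (A B : {set V}) : A \subset B -> Pr pi A <= Pr pi B.
Proof.
move=> AB; rewrite !Pr_expectation; apply: ler_sum => om _.
apply: ler_wpM2l; first exact: prob_omega_ge0.
by apply: nonempty_ind_mono; rewrite setSI.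
Qed.

End OutcomeProbability.

Section ExpectedProfit.
Variables (R : realFieldType) (V : finType) (par : V -> V) (r : V).
Variables (w pi p : V -> R) (a : V).
Hypothesis Hw : forall v : V, 0 <= w v.
Hypothesis Hpi : forall v : V, 0 < pi v <= 1.

Local Notation D := (subtree par a).
Local Notation d := (dist par r w a).
Local Notation pe := (path_edges par r).
Local Notation G := (G par r w pi p).
Local Notation P := (prob_omega pi).
Local Notation nonempty := (nonempty_ind R).
Local Notation zone := (zone par r a).

Lemma dist_ge0 : 0 <= d.
Proof. exact: sumr_ge0. Qed.

Definition reduced_weight (Q : {set V}) : R :=
  cover_weight (fun q => pe q :\: pe a) w Q.

(* Every nonempty subset of the sub-tree of a uses the whole root path of a,
   so on such sets W splits into d(a) plus the weight below a. *)
Lemma Wt_split (Q : {set V}) :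
  Q \subset D -> Wt par r w Q = reduced_weight Q + d * nonempty Q.
Proof.
move=> QD; rewrite /Wt (big_setID (pe a)) [RHS]addrC; congr (_ + _); last first.
  by rewrite /reduced_weight /cover_weight -coverD.
rewrite /nonempty; case: (eqVneq Q set0) => [->|/set0Pn [q qQ]].
  by rewrite big_set0 set0I big_set0 mulr0.
suff -> : cover pe Q :&: pe a = pe a by rewrite mulr1.
apply/setIidPr/subsetP => u.
rewrite inE => /andP[au ur]; apply/bigcupP; exists q => //.
rewrite inE ur andbT; apply: connect_trans au.
by move/subsetP/(_ q qQ): QD; rewrite inE.
Qed.

(* For a set Q below a, the cost W(Q) - x [Q nonempty] paid in one outcome. *)
Definition cost (x : R) (Q : {set V}) : R :=
  reduced_weight Q + (d - x) * nonempty Q.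

Lemma G_cost (x : R) (S : {set V}) : S \subset D ->
  G S x = \sum_(s in S) p s * pi s - \sum_om P om * cost x (S :&: om).
Proof.
move=> SD; rewrite /Defs.G /EW (Pr_expectation pi S).
suff -> : \sum_om P om * cost x (S :&: om) =
    \sum_om P om * Wt par r w (S :&: om) - x * \sum_om P om * nonempty (S :&: om).
  by ring.
rewrite mulr_sumr -sumrB; apply: eq_bigr => om _.
by rewrite Wt_split /cost; [ring | apply: subset_trans SD; exact: subsetIl].
Qed.

Definition cost_defect (x : R) (X Y : {set V}) : R :=
  cost x X + cost x Y - cost x (X :|: Y) - cost x (X :&: Y).

Lemma G_exchange (x : R) (A B : {set V}) : A \subset D -> B \subset D ->
  G (A :|: B) x + G (A :&: B) x - G A x - G B x =
  \sum_om P om * cost_defect x (A :&: om) (B :&: om).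
Proof.
move=> AD BD.
have sub_D (X Y : {set V}) : X \subset D -> X :&: Y \subset D.
  by move=> XD; apply: subset_trans XD; exact: subsetIl.
have ABD : A :|: B \subset D by rewrite subUset AD BD.
rewrite !G_cost // ?sub_D //.
have := sum_setU_setI (fun s => p s * pi s) A B.
suff -> : \sum_om P om * cost_defect x (A :&: om) (B :&: om) =
  \sum_om P om * cost x (A :&: om) + \sum_om P om * cost x (B :&: om)
  - \sum_om P om * cost x ((A :|: B) :&: om)
  - \sum_om P om * cost x ((A :&: B) :&: om) by lra.
rewrite -big_split -!sumrB; apply: eq_bigr => om _.
by rewrite /cost_defect setIUl -setIIl /=; ring.
Qed.

(* Below d(a), cost is submodular: coverage plus a nonnegative multiple of
   the nonempty indicator. *)
Lemma cost_defect_ge0 (x : R) (X Y : {set V}) :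
  x <= d -> 0 <= cost_defect x X Y.
Proof.
move=> xd; rewrite /cost_defect /cost.
have Wsub := cover_weight_submod (fun q => pe q :\: pe a) Hw X Y.
have Nsub := nonempty_ind_submod R X Y.
have := ler_wpM2l (_ : 0 <= d - x) Nsub; rewrite ?subr_ge0 // mulrDr.
rewrite /reduced_weight; lra.
Qed.

Lemma G_supermod (x : R) (A B : {set V}) :
  x <= d -> A \subset D -> B \subset D ->
  G A x + G B x <= G (A :|: B) x + G (A :&: B) x.
Proof.
move=> xd AD BD; rewrite -subr_ge0 opprD addrA (G_exchange x AD BD).
apply: sumr_ge0 => om _; apply: mulr_ge0; first exact: prob_omega_ge0.
exact: cost_defect_ge0.
Qed.

Lemma G_empty (x : R) : G set0 x = 0.
Proof.
have W0 : Wt par r w set0 = 0 by rewrite /Wt big_set0 big_set0.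
rewrite /Defs.G /EW /Pr !big_set0 subrr mulr0 addr0 big1 ?subrr //.
by move=> om _; rewrite set0I W0 mulr0.
Qed.

(* At x = d(a), sets with disjoint zones share neither nodes nor edges below
   a, so their profits add up. *)
Lemma G_sep_add (A B : {set V}) : A \subset D -> B \subset D ->
  [disjoint zone A & zone B] -> G (A :|: B) d = G A d + G B d.
Proof.
move=> AD BD dAB.
have AB0 : A :&: B = set0.
  by apply: disjoint_setI0; apply: disjointW dAB; exact: subsetUl.
have dcov : [disjoint reduced_cover par r a A & reduced_cover par r a B].
  by apply: disjointW dAB; exact: subsetUr.
have := G_exchange d AD BD; rewrite AB0 G_empty addr0 big1 => [|om _]; first lra.
rewrite /cost_defect /cost subrr !mul0r !addr0 /reduced_weight.
have dcov_om : [disjoint cover (fun q => pe q :\: pe a) (A :&: om) &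
                        cover (fun q => pe q :\: pe a) (B :&: om)].
  by apply: disjointW dcov; apply: coverS; exact: subsetIl.
have := cover_weight_modular w dcov_om; rewrite setIACA setIid AB0 set0I.
by move=> <-; ring.
Qed.

Lemma G_sum_separated (I : finType) (Q : pred I) (A X : I -> {set V}) :
  (forall i, Q i -> X i \subset D) ->
  (forall i, Q i -> zone (A i) \subset X i) ->
  (forall i j, Q i -> Q j -> i != j -> [disjoint X i & X j]) ->
  G (\bigcup_(i | Q i) A i) d = \sum_(i | Q i) G (A i) d.
Proof.
move=> XD AX Xdisj.
have AD i : Q i -> A i \subset D.
  move=> Qi; apply: subset_trans (XD i Qi).
  by apply: subset_trans (AX i Qi); exact: subsetUl.
rewrite -big_filter -[RHS]big_filter.
have : all Q [seq i <- index_enum I | Q i] by exact: filter_all.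
have : uniq [seq i <- index_enum I | Q i] by rewrite filter_uniq ?index_enum_uniq.
elim: [seq i <- index_enum I | Q i] => [|i s IH] /=.
  by rewrite !big_nil G_empty.
case/andP => i_notin_s us /andP[Qi Qs]; rewrite !big_cons -IH //.
have Qs' j : j \in s -> Q j by move/(allP Qs).
apply: G_sep_add; first exact: AD.
  by rewrite bigcup_seq; apply/bigcupsP => j /Qs'; exact: AD.
rewrite (big_morph zone (zoneU par r a) (zone0 par r a)) bigcup_seq.
apply: disjointWl (AX i Qi) _; apply/bigcup_disjoint => j js.
apply: disjointWr (AX j (Qs' j js)) _; apply: Xdisj => //; first exact: Qs'.
by apply: contraNneq i_notin_s => ->.
Qed.

Lemma G_shift (S : {set V}) (x y : R) : G S y = G S x + (y - x) * Pr pi S.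
Proof. by rewrite /Defs.G; ring. Qed.

Lemma optimal_sub_max_optimal (x : R) (S U : {set V}) : x <= d ->
  optimal par r w pi p D x S -> max_optimal par r w pi p D d U -> S \subset U.
Proof.
move=> xd [SD Sopt] [[UD Uopt] Umax].
have SUD : S :|: U \subset D by rewrite subUset SD UD.
have gain_x : G U x <= G (S :|: U) x.
  have := G_supermod xd SD UD.
  have := Sopt (S :&: U) (subset_trans (subsetIl S U) SD); lra.
have SUopt : optimal par r w pi p D d (S :|: U).
  split=> // S' S'D; apply: le_trans (Uopt S' S'D) _.
  rewrite (G_shift U x) (G_shift (S :|: U) x); apply: lerD gain_x _.
  by apply: ler_wpM2l; [rewrite subr_ge0 | apply: (Pr_mono Hpi); exact: subsetUr].
have : ~~ (U \proper S :|: U) by apply/negP => pU; exact: Umax _ pU SUD SUopt.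
by rewrite properEneq subsetUr andbT negbK => /eqP ->; exact: subsetUl.
Qed.

End ExpectedProfit.

Lemma ler_sum_eq (R : numDomainType) (I : finType) (Q : pred I) (F H : I -> R) :
  (forall i, Q i -> F i <= H i) -> \sum_(i | Q i) F i = \sum_(i | Q i) H i ->
  forall i, Q i -> F i = H i.
Proof.
move=> FH sumFH i Qi; apply/eqP; rewrite eq_sym -subr_eq0; apply/eqP.
apply: (psumr_eq0P (P := Q) (F := fun i => H i - F i)) => //.
  by move=> j Qj; rewrite subr_ge0 FH.
by rewrite sumrB sumFH subrr.
Qed.

Section BlockOptimality.
Variables (R : realFieldType) (V : finType) (par : V -> V) (r : V).
Variables (w pi p : V -> R) (x : R).
Variables (I : finType) (Q : pred I) (X : I -> {set V}) (D : {set V}).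
Hypothesis X_disj : forall i j, Q i -> Q j -> i != j -> [disjoint X i & X j].
Hypothesis X_cover : D = \bigcup_(i | Q i) X i.
Hypothesis G_blocks : forall S : {set V}, S \subset D ->
  G par r w pi p S x = \sum_(i | Q i) G par r w pi p (S :&: X i) x.
Variable Sb : I -> {set V}.
Hypothesis Sb_max : forall i, Q i -> max_optimal par r w pi p (X i) x (Sb i).

Local Notation G := (G par r w pi p).
Local Notation optimal := (optimal par r w pi p).
Local Notation U := (\bigcup_(i | Q i) Sb i).

Lemma Sb_sub i : Q i -> Sb i \subset X i.
Proof. by case/Sb_max => [[]]. Qed.

Lemma union_block i : Q i -> U :&: X i = Sb i.
Proof.
move=> Qi; apply/setP => v; rewrite inE; apply/andP/idP => [[]|vSi]; last first.
  by split; [apply/bigcupP; exists i | apply: (subsetP (Sb_sub Qi))].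
case/bigcupP => j Qj vSj vXi; case: (eqVneq i j) => [-> //|ij].
have vXj := subsetP (Sb_sub Qj) v vSj.
by rewrite (disjointFr (X_disj Qi Qj ij) vXi) in vXj.
Qed.

Lemma union_sub : U \subset D.
Proof.
rewrite X_cover; apply/bigcupsP => i Qi; apply: subset_trans (Sb_sub Qi) _.
exact: (bigcup_sup i Qi).
Qed.

(* Being additive over the blocks, G(., x) is maximised blockwise. *)
Lemma union_optimal : optimal D x U.
Proof.
split=> [|S SD]; first exact: union_sub.
rewrite (G_blocks SD) (G_blocks union_sub); apply: ler_sum => i Qi.
rewrite union_block //; case: (Sb_max Qi) => [[_ Sopt] _]; apply: Sopt.
exact: subsetIr.
Qed.

(* A strictly larger optimal set would have, in the block of one of its new
   elements, a piece strictly larger than Sb i and just as good. *)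
Lemma union_max_optimal : max_optimal par r w pi p D x U.
Proof.
split=> [|S pUS SD [_ Sopt]]; first exact: union_optimal.
have [US [v vS vU]] := properP pUS.
have GSU : G S x = G U x.
  by apply/le_anti; rewrite Sopt ?union_sub //; case: union_optimal => _ ->.
have piece_eq : forall i, Q i -> G (S :&: X i) x = G (Sb i) x.
  apply: ler_sum_eq => [i Qi|]; last first.
    rewrite -(G_blocks SD) GSU (G_blocks union_sub).
    by apply: eq_bigr => i /union_block ->.
  by case: (Sb_max Qi) => [[_ Sopt_i] _]; apply: Sopt_i; exact: subsetIr.
have : v \in D := subsetP SD v vS.
rewrite X_cover => /bigcupP [j Qj vXj].
case: (Sb_max Qj) => [[_ Sopt_j] Smax_j]; apply: (Smax_j (S :&: X j)).
- apply/properP; split.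
    by rewrite -(union_block Qj) setSI.
  exists v; first by rewrite inE vS vXj.
  by apply: contra vU => vSj; apply/bigcupP; exists j.
- exact: subsetIr.
split=> [|S' S'Xj]; first exact: subsetIr.
by rewrite piece_eq //; apply: Sopt_j.
Qed.

End BlockOptimality.

Section Proposition8.
Variables (R : realFieldType) (V : finType) (par : V -> V) (r : V).
Variables (w pi p : V -> R) (a : V).
Hypothesis Htree : is_tree par r.

Local Notation D := (subtree par a).
Local Notation d := (dist par r w a).
Local Notation G := (G par r w pi p).
Local Notation child := (is_child par r a).

Lemma G_blocks (S : {set V}) : S \subset D ->
  G S d = \sum_(i | block_index par r a i) G (S :&: block par a i) d.
Proof.
move=> SD.
have parts : S = \bigcup_(i | block_index par r a i) (S :&: block par a i).
  apply/setP => v; apply/idP/bigcupP => [vS|[i _]]; last by rewrite inE => /andP[].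
  have : v \in D := subsetP SD v vS.
  by rewrite (blocks_cover Htree) => /bigcupP [i bi vi]; exists i; rewrite ?inE ?vS.
rewrite {1}parts; apply: G_sum_separated => //.
- exact: block_subtree.
- by move=> i bi; apply: (zone_block bi); exact: subsetIr.
exact: blocks_disjoint.
Qed.

Variables (S0 : {set V}) (Sc : V -> {set V}).
Hypothesis H0 : max_optimal par r w pi p [set a] d S0.
Hypothesis Hc : forall c : V, child c ->
  max_optimal par r w pi p (subtree par c) d (Sc c).

Let Sb (i : V) : {set V} := if i == a then S0 else Sc i.

Lemma Sb_max_optimal i :
  block_index par r a i -> max_optimal par r w pi p (block par a i) d (Sb i).
Proof. by rewrite /block_index /block /Sb; case: eqP => [-> _ | _ /= /Hc]. Qed.

Lemma union_Sb :
  \bigcup_(i | block_index par r a i) Sb i = S0 :|: \bigcup_(c | child c) Sc c.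
Proof.
rewrite (bigD1 a) /block_index ?eqxx //= /Sb eqxx; congr (_ :|: _).
apply: eq_big => [c|c /andP[_ /negbTE -> //]].
case: (eqVneq c a) => [->|_]; rewrite ?andbT ?andbF //=.
by apply/esym/negP => /(child_neq Htree); rewrite eqxx.
Qed.

Lemma union_Sb_max_optimal :
  max_optimal par r w pi p D d (S0 :|: \bigcup_(c | child c) Sc c).
Proof.
rewrite -union_Sb; apply: union_max_optimal.
- exact: blocks_disjoint.
- exact: blocks_cover.
- exact: G_blocks.
exact: Sb_max_optimal.
Qed.

End Proposition8.

Theorem proposition8 (R : realFieldType) (V : finType) (par : V -> V) (r : V)
    (w pi p : V -> R)
    (Htree : is_tree par r)
    (Hw : forall v : V, 0 <= w v)
    (Hpi : forall v : V, 0 < pi v <= 1)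
    (a : V) (S0 : {set V}) (Sc : V -> {set V})
    (H0 : max_optimal par r w pi p [set a] (dist par r w a) S0)
    (Hc : forall c : V, is_child par r a c ->
            max_optimal par r w pi p (subtree par c) (dist par r w a) (Sc c)) :
  max_optimal par r w pi p (subtree par a) (dist par r w a)
              (S0 :|: \bigcup_(c | is_child par r a c) Sc c)
  /\ matryoshka par r w pi p a (S0 :|: \bigcup_(c | is_child par r a c) Sc c)
  /\ (forall S : {set V}, matryoshka par r w pi p a S ->
        S \subset S0 :|: \bigcup_(c | is_child par r a c) Sc c).
Proof.
have Umax := union_Sb_max_optimal Htree H0 Hc.
split=> //; split.
  by exists (dist par r w a); rewrite (dist_ge0 par r a Hw) lexx.
move=> S [x [/andP[_ xd] [Sopt _]]].
exact: (optimal_sub_max_optimal Hw Hpi xd Sopt Umax).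
Qed.
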